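(* For all $(n,k),(p,q)\in\mathcal{I}$, $\Delta_{p,q}(\psi_{n,k})=\delta^{n,k}_{p,q}\,I_d$, where $\delta^{n,k}_{p,q}$ equals $1$ if $(n,k)=(p,q)$ and $0$ otherwise. That is, the generalized functions $\delta_{p,q}$ form a dual family to the functions $\psi_{n,k}$.
   Context: Let $d,m\geq 1$. Let $\alpha:[0,1]\to\mathbb{R}^{d\times d}$, $\sqrt{\Gamma}:[0,1]\to\mathbb{R}^{d\times m}$ be continuous, $\Gamma=\sqrt{\Gamma}\sqrt{\Gamma}^{T}$. Let $F(s,t)$ be the flow ($\partial_tF(s,t)=\alpha(t)F(s,t)$, $F(s,s)=I_d$), $h_u(s,t)=\int_s^t F(w,u)\Gamma(w)F(w,u)^Tdw$, $h=h_0$, $g(t)=F(0,t)$. Non-degeneracy: $F(u,v)h_u(u,v)F(u,v)^T$ is positive definite for all $0\le u<v\le1$. $\mathcal{I}=\{(0,0)\}\cup\{(n,k):n\ge1,\ 0\le k<2^{n-1}\}$. Partition: fix $\rho\in(0,1)$ and reals $l_{n,k}<m_{n,k}<r_{n,k}$ ($n\ge1$) with $l_{1,0}=0$, $r_{1,0}=1$, $l_{n+1,2k}=l_{n,k}$, $r_{n+1,2k}=l_{n+1,2k+1}=m_{n,k}$, $r_{n+1,2k+1}=r_{n,k}$, $\max(r_{n,k}-m_{n,k},m_{n,k}-l_{n,k})<\rho(r_{n,k}-l_{n,k})$. For $n\ge1$ (writing $l,m,r$ for $l_{n,k},m_{n,k},r_{n,k}$): $\Sigma_{n,k}=h_m(l,m)h_m(l,r)^{-1}h_m(m,r)$,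 $\sigma_{n,k}$ its lower-triangular Cholesky factor with positive diagonal, $L_{n,k}=h(l,m)^{-1}g(m)^{-1}\sigma_{n,k}$, $R_{n,k}=h(m,r)^{-1}g(m)^{-1}\sigma_{n,k}$, $M_{n,k}=g(m)^T(\sigma_{n,k}^{-1})^T$, and $\psi_{n,k}(t)=g(t)h(l,t)L_{n,k}$ on $[l,m]$, $g(t)h(t,r)R_{n,k}$ on $[m,r]$, $0$ elsewhere. Also $\sigma_{0,0}$ is the lower-triangular Cholesky factor of $g(1)h(0,1)g(1)^T$, $L_{0,0}=h(0,1)^{-1}g(1)^{-1}\sigma_{0,0}$, $\psi_{0,0}(t)=g(t)h(0,t)L_{0,0}$. Dual family: $\delta_{n,k}$ is the $\mathbb{R}^{d\times d}$-valued combination of Dirac masses $\delta_{n,k}(t)=(g(t)^{-1})^T\big(M_{n,k}\delta(t-m)-L_{n,k}\delta(t-l)-R_{n,k}\delta(t-r)\big)$ for $n\ge1$, and $\delta_{0,0}(t)=(g(t)^{-1})^TL_{0,0}\delta(t-1)$. Its pairing with a continuous matrix-valued function $x$ on $[0,1]$ is $\Delta_{n,k}(x)=\int\delta_{n,k}(t)^Tx(t)\,dt$, i.e. $\Delta_{n,k}(x)=M_{n,k}^Tg(m)^{-1}x(m)-L_{n,k}^Tg(l)^{-1}x(l)-R_{n,k}^Tg(r)^{-1}x(r)$ for $n\ge1$ and $\Delta_{0,0}(x)=L_{0,0}^Tg(1)^{-1}x(1)$. *)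

From HB Require Import structures.
From mathcomp Require Import all_boot all_order all_algebra.
From mathcomp Require Import all_classical all_reals all_analysis.
Set Implicit Arguments. Unset Strict Implicit. Unset Printing Implicit Defensive.
Import Order.TTheory GRing.Theory Num.Theory.
Import numFieldNormedType.Exports.
Local Open Scope classical_set_scope.
Local Open Scope ring_scope.

Definition mx_integral (R : realType) (p q : nat) (f : R -> 'M[R]_(p, q)) (a b : R)
  : 'M[R]_(p, q) :=
  \matrix_(i, j) Rintegral (@lebesgue_measure R) `[a, b] (fun w => f w i j).

Definition Gam (R : realType) (d m : nat) (sG : R -> 'M[R]_(d, m)) (w : R) : 'M[R]_d :=
  sG w *m (sG w)^T.

Definition hu (R : realType) (d m : nat) (F : R -> R -> 'M[R]_d)
  (sG : R -> 'M[R]_(d, m)) (u s t : R) : 'M[R]_d :=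
  mx_integral (fun w => F w u *m Gam sG w *m (F w u)^T) s t.

Definition h0 (R : realType) (d m : nat) (F : R -> R -> 'M[R]_d)
  (sG : R -> 'M[R]_(d, m)) (s t : R) : 'M[R]_d := hu F sG 0 s t.

Definition gfl (R : realType) (d : nat) (F : R -> R -> 'M[R]_d) (t : R) : 'M[R]_d :=
  F 0 t.

Definition posdef (R : realType) (d : nat) (A : 'M[R]_d) : Prop :=
  forall v : 'cV[R]_d, v != 0 -> 0 < (v^T *m A *m v) 0 0.

Definition is_cholesky (R : realType) (d : nat) (S sig : 'M[R]_d) : Prop :=
  [/\ forall i j : 'I_d, (i < j)%N -> sig i j = 0,
      forall i : 'I_d, 0 < sig i i
    & sig *m sig^T = S].

Definition Sigma (R : realType) (d m : nat) (F : R -> R -> 'M[R]_d)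
  (sG : R -> 'M[R]_(d, m)) (l mid r : R) : 'M[R]_d :=
  hu F sG mid l mid *m invmx (hu F sG mid l r) *m hu F sG mid mid r.

Definition Lmat (R : realType) (d m : nat) (F : R -> R -> 'M[R]_d)
  (sG : R -> 'M[R]_(d, m)) (sig : 'M[R]_d) (l mid : R) : 'M[R]_d :=
  invmx (h0 F sG l mid) *m invmx (gfl F mid) *m sig.
Definition Rmat (R : realType) (d m : nat) (F : R -> R -> 'M[R]_d)
  (sG : R -> 'M[R]_(d, m)) (sig : 'M[R]_d) (mid r : R) : 'M[R]_d :=
  invmx (h0 F sG mid r) *m invmx (gfl F mid) *m sig.
Definition Mmat (R : realType) (d : nat) (F : R -> R -> 'M[R]_d)
  (sig : 'M[R]_d) (mid : R) : 'M[R]_d :=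
  (gfl F mid)^T *m (invmx sig)^T.

Definition L00 (R : realType) (d m : nat) (F : R -> R -> 'M[R]_d)
  (sG : R -> 'M[R]_(d, m)) (sig0 : 'M[R]_d) : 'M[R]_d :=
  invmx (h0 F sG 0 1) *m invmx (gfl F 1) *m sig0.

Definition psi_nk (R : realType) (d m : nat) (F : R -> R -> 'M[R]_d)
  (sG : R -> 'M[R]_(d, m)) (sig : 'M[R]_d) (l mid r : R) (t : R) : 'M[R]_d :=
  if (l <= t) && (t <= mid) then gfl F t *m h0 F sG l t *m Lmat F sG sig l mid
  else if (mid <= t) && (t <= r) then gfl F t *m h0 F sG t r *m Rmat F sG sig mid r
  else 0.

Definition psi_00 (R : realType) (d m : nat) (F : R -> R -> 'M[R]_d)
  (sG : R -> 'M[R]_(d, m)) (sig0 : 'M[R]_d) (t : R) : 'M[R]_d :=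
  gfl F t *m h0 F sG 0 t *m L00 F sG sig0.

Definition inI (n k : nat) : bool :=
  ((n == 0) && (k == 0))%N || ((0 < n) && (k < 2 ^ n.-1))%N.

Definition psi (R : realType) (d m : nat) (F : R -> R -> 'M[R]_d)
  (sG : R -> 'M[R]_(d, m)) (sigma : nat -> nat -> 'M[R]_d)
  (lp mp rp : nat -> nat -> R) (n k : nat) (t : R) : 'M[R]_d :=
  if n == 0%N then psi_00 F sG (sigma 0%N 0%N) t
  else psi_nk F sG (sigma n k) (lp n k) (mp n k) (rp n k) t.

(* Pairing Delta_{p,q}(x) of the dual generalized function delta_{p,q} with x *)
Definition Delta (R : realType) (d m : nat) (F : R -> R -> 'M[R]_d)
  (sG : R -> 'M[R]_(d, m)) (sigma : nat -> nat -> 'M[R]_d)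
  (lp mp rp : nat -> nat -> R) (p q : nat) (x : R -> 'M[R]_d) : 'M[R]_d :=
  if p == 0%N then
    (L00 F sG (sigma 0%N 0%N))^T *m invmx (gfl F 1) *m x 1
  else
    let l := lp p q in let mid := mp p q in let r := rp p q in
    let sig := sigma p q in
    (Mmat F sig mid)^T *m invmx (gfl F mid) *m x mid
    - (Lmat F sG sig l mid)^T *m invmx (gfl F l) *m x l
    - (Rmat F sG sig mid r)^T *m invmx (gfl F r) *m x r.

Definition I01 (R : realType) : set R := `[0, 1].

From HB Require Import structures.
From mathcomp Require Import all_boot all_order all_algebra.
From mathcomp Require Import all_classical all_reals all_analysis.
From mathcomp Require Import perm zify lra.
Import Order.TTheory GRing.Theory Num.Theory.
Import numFieldNormedType.Exports.
Local Open Scope classical_set_scope.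
Local Open Scope ring_scope.
Set Implicit Arguments. Unset Strict Implicit. Unset Printing Implicit Defensive.

(** Since g(t)^-1 F(s,t) has zero derivative, F(s,t) = g(t) g(s)^-1, hence
    h_u = g(u) h g(u)^T and, with A = h(l,m) and B = h(m,r), the Cholesky
    equation reads sigma sigma^T = g(m) A (A + B)^-1 B g(m)^T.  As
    (A (A + B)^-1 B)^-1 = A^-1 + B^-1, this gives M = L + R, and symmetry of h
    gives L^T A = R^T B.  The pairing Delta_{p,q} only sees the values at l, m, r,
    and by additivity of h it annihilates t |-> g(t) h(a,t) C when a <= l and
    t |-> g(t) h(t,b) C when r <= b.  Dyadic intervals are nested or
    non-overlapping, so for (n,k) <> (p,q) the function psi_{n,k} is of one of
    these two forms, or zero, at l, m and r; for (n,k) = (p,q) the pairing is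
    M^T A L = 1. *)

(** * Dyadic intervals *)

Section DyadicPartition.
Variable R : realFieldType.
Variables lp mp rp : nat -> nat -> R.
Hypothesis lp_root : lp 1%N 0%N = 0.
Hypothesis rp_root : rp 1%N 0%N = 1.
Hypothesis children_bounds : forall n k, (0 < n)%N -> (k < 2 ^ n.-1)%N ->
  [/\ lp n.+1 k.*2 = lp n k, rp n.+1 k.*2 = mp n k,
      lp n.+1 k.*2.+1 = mp n k & rp n.+1 k.*2.+1 = rp n k].
Hypothesis node_ordered : forall n k, (0 < n)%N -> (k < 2 ^ n.-1)%N ->
  lp n k < mp n k /\ mp n k < rp n k.

Definition node n k := ((0 < n) && (k < 2 ^ n.-1))%N.

Lemma node_lt n k : node n k -> lp n k < mp n k /\ mp n k < rp n k.
Proof. by case/andP; apply: node_ordered. Qed.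

Lemma node_parent n k : (0 < n)%N -> node n.+1 k -> node n k./2.
Proof.
case: n => // n _ /andP[_ hk]; apply/andP; split => //.
by rewrite -divn2 ltn_divLR // -expnSr.
Qed.

Lemma node_child_bounds n k : (0 < n)%N -> node n.+1 k ->
  lp n.+1 k = (if odd k then mp n k./2 else lp n k./2) /\
  rp n.+1 k = (if odd k then rp n k./2 else mp n k./2).
Proof.
move=> n0 hk; have /andP[_ hpk] := node_parent n0 hk.
have [el er ol or] := children_bounds n0 hpk.
rewrite -[X in lp _ X](odd_double_half k) -[X in rp _ X](odd_double_half k).
by case: (odd k); rewrite /= ?add0n.
Qed.

Lemma node_child_sub n k : (0 < n)%N -> node n.+1 k ->
  lp n k./2 <= lp n.+1 k /\ rp n.+1 k <= rp n k./2.
Proof.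
move=> n0 hk; have [lm mr] := node_lt (node_parent n0 hk).
by have [-> ->] := node_child_bounds n0 hk; case: (odd k); split; lra.
Qed.

Lemma half_divn_exp2 k j : (k./2 %/ 2 ^ j = k %/ 2 ^ j.+1)%N.
Proof. by rewrite -divn2 -divnMA -expnS. Qed.

Lemma node_ancestor j n k : (0 < n)%N -> node (n + j) k -> node n (k %/ 2 ^ j).
Proof.
move=> n0; elim: j k => [|j IH] k; first by rewrite addn0 expn0 divn1.
rewrite addnS -half_divn_exp2 => hk.
exact/IH/(node_parent (ltn_addr _ n0) hk).
Qed.

Lemma node_ancestor_sub j n k : (0 < n)%N -> node (n + j) k ->
  lp n (k %/ 2 ^ j) <= lp (n + j) k /\ rp (n + j) k <= rp n (k %/ 2 ^ j).
Proof.
move=> n0; elim: j k => [|j IH] k; first by rewrite addn0 expn0 divn1; split.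
rewrite addnS => hk; have n0' := ltn_addr j n0.
have [cl cr] := node_child_sub n0' hk.
have [al ar] := IH _ (node_parent n0' hk).
by rewrite half_divn_exp2 in al ar; split; [apply: le_trans cl|apply: le_trans ar].
Qed.

Lemma node_ancestor_half j n k : (0 < n)%N -> node (n + j.+1) k ->
  rp (n + j.+1) k <= mp n (k %/ 2 ^ j.+1) \/ mp n (k %/ 2 ^ j.+1) <= lp (n + j.+1) k.
Proof.
rewrite -addSnnS => n0 hk; have n0' : (0 < n.+1)%N by [].
have [al ar] := node_ancestor_sub n0' hk.
have [cl cr] := node_child_bounds n0 (node_ancestor n0' hk).
rewrite -divn2 -divnMA -expnSr in cl cr; rewrite cl in al; rewrite cr in ar.
by case: (odd _) al ar => al ar; [right|left].
Qed.

Lemma node_level_disjoint n a b : node n a -> node n b -> (a < b)%N -> rp n a <= lp n b.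
Proof.
elim: n a b => [|n IH] a b; first by [].
case: (posnP n) => [->|n0] ha hb ab.
  by move: ha hb => /andP[_] + /andP[_]; rewrite expn0; lia.
have [ral lab] := (node_child_bounds n0 ha, node_child_bounds n0 hb).
have [pa pb] := (node_parent n0 ha, node_parent n0 hb).
have : (a./2 <= b./2)%N by rewrite -!divn2 leq_div2r // ltnW.
rewrite leq_eqVlt => /orP[/eqP e|lt].
  have [oa ob] : ~~ odd a /\ odd b.
    move: ab; rewrite -(odd_double_half a) -(odd_double_half b) e.
    by case: (odd a); case: (odd b) => //=; lia.
  by rewrite ral.2 lab.1 (negbTE oa) ob e.
have [_ ar] := node_child_sub n0 ha; have [bl _] := node_child_sub n0 hb.
by apply: le_trans ar _; apply: le_trans _ bl; apply: IH.
Qed.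

Lemma node_in01 n k : node n k -> 0 <= lp n k /\ rp n k <= 1.
Proof.
move=> hk; have n0 : (0 < n)%N by case/andP: hk.
rewrite -(prednK n0) -add1n in hk *.
have := node_ancestor_sub (ltn0Sn 0) hk.
have /andP[_ hk'] := hk; rewrite add1n /= in hk'.
by rewrite divn_small // lp_root rp_root.
Qed.

Lemma node_nested_or_disjoint n k p q : node n k -> node p q -> (n <= p)%N ->
  (n != p) || (k != q) ->
  [\/ lp n k <= lp p q /\ rp p q <= mp n k, mp n k <= lp p q /\ rp p q <= rp n k,
      rp p q <= lp n k | rp n k <= lp p q].
Proof.
move=> hk hq /subnKC ep ne; have n0 : (0 < n)%N by case/andP: hk.
rewrite -{}ep in hq ne *; set j := (p - n)%N in hq ne *.
have ha := node_ancestor n0 hq; have [al ar] := node_ancestor_sub n0 hq.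
case: (ltngtP (q %/ 2 ^ j) k) => [lt|gt|eq].
- by apply: Or43; apply: le_trans ar (node_level_disjoint ha hk lt).
- by apply: Or44; apply: le_trans (node_level_disjoint hk ha gt) al.
case: j eq al ar hq ne ha => [|j] eq al ar hq ne _.
  by move: ne; rewrite addn0 expn0 divn1 in eq *; rewrite eq !eqxx.
rewrite eq in al ar; case: (node_ancestor_half n0 hq); rewrite eq => h.
  by apply: Or41.
by apply: Or42.
Qed.

Definition outside_node n k t := (t <= lp n k) || (rp n k <= t).

Lemma node_relative_position n k p q : node n k -> node p q -> (n != p) || (k != q) ->
  [\/ lp n k <= lp p q /\ rp p q <= mp n k,
      mp n k <= lp p q /\ rp p q <= rp n k |
      [&& outside_node n k (lp p q), outside_node n k (mp p q)
        & outside_node n k (rp p q)]].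
Proof.
move=> hk hq ne; have [lmk mrk] := node_lt hk; have [lmq mrq] := node_lt hq.
rewrite /outside_node; case: (leqP n p) => np.
  case: (node_nested_or_disjoint hk hq np ne) => [h|h|h|h]; [exact: Or31|exact: Or32|..];
  by apply: Or33; apply/and3P; split; apply/orP; first [left; lra | right; lra].
have ne' : (p != n) || (q != k) by rewrite (eq_sym p) (eq_sym q).
apply: Or33; apply/and3P.
case: (node_nested_or_disjoint hq hk (ltnW np) ne') => h;
  by split; apply/orP; first [left; lra | right; lra].
Qed.

End DyadicPartition.

(** * Matrix identities *)

Section MatrixIdentities.
Variables (K : fieldType) (n : nat).
Implicit Types A B C G S X s : 'M[K]_n.

Lemma invmxM A B : A \in unitmx -> B \in unitmx -> invmx (A *m B) = invmx B *m invmx A.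
Proof.
move=> uA uB; have uAB : A *m B \in unitmx by rewrite unitmx_mul uA uB.
apply: (can_inj (mulKmx uAB)); rewrite mulmxV // -!mulmxA (mulmxA B) mulmxV //.
by rewrite mul1mx mulmxV.
Qed.

Lemma invmx_parallel_sum A B : A \in unitmx -> B \in unitmx -> A + B \in unitmx ->
  invmx (A *m invmx (A + B) *m B) = invmx A + invmx B.
Proof.
move=> uA uB uAB; have uV : invmx (A + B) \in unitmx by rewrite unitmx_inv.
rewrite !invmxM ?unitmx_mul ?uA ?uV // invmxK mulmxDl mulmxV // mulmxDr mulmx1.
by rewrite mulmxA mulVmx // mul1mx addrC.
Qed.

Lemma trmx_invmx_mul_sym A X : A^T = A -> A \in unitmx -> (invmx A *m X)^T *m A = X^T.
Proof. by move=> sA uA; rewrite trmx_mul trmx_inv sA mulmxKV. Qed.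

Lemma conj_cholesky_trmx G S s : G \in unitmx -> S \in unitmx -> s \in unitmx ->
  s *m s^T = G *m S *m G^T -> G^T *m (invmx s)^T = invmx S *m invmx G *m s.
Proof.
move=> uG uS us hs; apply: (can_inj (mulKmx uS)); rewrite -!mulmxA mulKVmx //.
apply: (can_inj (mulKmx uG)); rewrite mulKVmx // !mulmxA -hs.
by rewrite trmx_inv -mulmxA mulmxV ?unitmx_tr // mulmx1.
Qed.

Lemma cholesky_quad_form G S s : G \in unitmx -> S \in unitmx -> s \in unitmx ->
  s *m s^T = G *m S *m G^T ->
  (invmx S *m invmx G *m s)^T *m S *m (invmx S *m invmx G *m s) = 1%:M.
Proof.
move=> uG uS us hs; rewrite -conj_cholesky_trmx // trmx_mul !trmxK -!mulmxA.
by rewrite (mulmxA G) (mulmxA (G *m S)) -hs -mulmxA mulKmx // -trmx_mul mulVmx ?trmx1.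
Qed.

Lemma conj_invmx_conj G A B C : G \in unitmx -> C \in unitmx ->
  G *m A *m G^T *m invmx (G *m C *m G^T) *m (G *m B *m G^T) =
  G *m A *m invmx C *m B *m G^T.
Proof.
move=> uG uC; have uGt : G^T \in unitmx by rewrite unitmx_tr.
by rewrite !invmxM ?unitmx_mul ?uG ?uC // !mulmxA mulmxK // mulmxKV.
Qed.

Lemma dual_combination_eq0 (Mt Lt Rt A B C fl fm fr : 'M[K]_n) :
  Mt = Lt + Rt -> Lt *m A = Rt *m B -> fm - fl = A *m C -> fr - fm = B *m C ->
  Mt *m fm - Lt *m fl - Rt *m fr = 0.
Proof.
move=> -> eLR efm efr.
have -> : (Lt + Rt) *m fm - Lt *m fl - Rt *m fr = Lt *m (fm - fl) - Rt *m (fr - fm).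
  by rewrite mulmxDl !mulmxBr opprB addrA (addrAC (Lt *m fm)).
by rewrite efm efr !mulmxA eLR subrr.
Qed.

End MatrixIdentities.

Section PositiveDefinite.
Variables (R : realType) (n : nat).

Lemma posdef_unitmx (A : 'M[R]_n) : posdef A -> A \in unitmx.
Proof.
move=> pdA; apply/negPn/negP => nuA.
have kA : kermx A != 0.
  rewrite -mxrank_eq0 mxrank_ker subn_eq0 -ltnNge.
  by move: nuA; rewrite -row_free_unit /row_free ltn_neqAle rank_leq_row andbT.
have [i ki] : exists i, row i (kermx A) != 0.
  apply/existsP; apply: contraR kA => /existsPn h.
  by apply/eqP/row_matrixP => i; rewrite row0; apply/eqP/negPn/h.
have vA : row i (kermx A) *m A = 0 by apply/sub_kermxP/row_sub.
by have := pdA (row i (kermx A))^T; rewrite trmx_eq0 ki trmxK vA mul0mx mxE ltxx => /(_ isT).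
Qed.

Lemma cholesky_unitmx (S s : 'M[R]_n) : is_cholesky S s -> s \in unitmx.
Proof.
case=> trig pos _; rewrite unitmxE det_trig; last exact/is_trig_mxP.
by rewrite unitfE; apply/lt0r_neq0/prodr_gt0 => i _; apply: pos.
Qed.

End PositiveDefinite.

(** * Regularity of the flow *)

Section RingClosedFunctions.
Variable R : realType.
Implicit Types (P : (R -> R) -> Prop) (f g : R -> R).

(* Continuity and differentiability at a point are both of this form, which gives
   the regularity of entries of determinants, adjugates and products at once. *)
Definition ring_closed_fun P := [/\ forall c, P (fun=> c),
  forall f g, P f -> P g -> P (fun t => f t + g t)
  & forall f g, P f -> P g -> P (fun t => f t * g t)].

Section Closure.
Variables (P : (R -> R) -> Prop) (PR : ring_closed_fun P).

Lemma closed_big (op : R -> R -> R) (idx : R) (I : Type) (s : seq I) (F : I -> R -> R) :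
  P (fun=> idx) -> (forall f g, P f -> P g -> P (fun t => op (f t) (g t))) ->
  (forall i, P (F i)) -> P (fun t => \big[op/idx]_(i <- s) F i t).
Proof.
move=> P0 Pop PF; elim: s => [|i s IH].
  by rewrite (_ : (fun t => _) = fun=> idx) //; apply/funext => t; rewrite big_nil.
rewrite (_ : (fun t => _) = fun t => op (F i t) (\big[op/idx]_(j <- s) F j t)).
  exact: Pop.
by apply/funext => t; rewrite big_cons.
Qed.

Lemma closed_sum (I : Type) (s : seq I) (F : I -> R -> R) :
  (forall i, P (F i)) -> P (fun t => \sum_(i <- s) F i t).
Proof. by case: PR => Pc Pa _; apply: (@closed_big +%R 0). Qed.

Lemma closed_prod (I : Type) (s : seq I) (F : I -> R -> R) :
  (forall i, P (F i)) -> P (fun t => \prod_(i <- s) F i t).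
Proof. by case: PR => Pc _ Pm; apply: (@closed_big *%R 1). Qed.

Lemma closed_det n (M : R -> 'M[R]_n) :
  (forall i j, P (fun t => M t i j)) -> P (fun t => \det (M t)).
Proof.
case: PR => Pc Pa Pm hM.
rewrite (_ : (fun t => _) = fun t => \sum_(s : 'S_n) (-1) ^+ s * \prod_i M t i (s i)) //.
by apply: closed_sum => s; apply: (Pm (fun=> _)) => //; apply: closed_prod.
Qed.

Lemma closed_mulmx m n p (A : R -> 'M[R]_(m, n)) (B : R -> 'M[R]_(n, p)) :
  (forall i j, P (fun t => A t i j)) -> (forall i j, P (fun t => B t i j)) ->
  forall i j, P (fun t => (A t *m B t) i j).
Proof.
case: PR => Pc Pa Pm hA hB i j; under [X in P X]funext do rewrite mxE.
by apply: closed_sum => k; apply: Pm.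
Qed.

Lemma closed_trmx m n (A : R -> 'M[R]_(m, n)) :
  (forall i j, P (fun t => A t i j)) -> forall i j, P (fun t => (A t)^T i j).
Proof. by move=> hA i j; under [X in P X]funext do rewrite mxE. Qed.

Lemma closed_adjinv n (M : R -> 'M[R]_n) :
  P (fun t => (\det (M t))^-1) -> (forall i j, P (fun t => M t i j)) ->
  forall i j, P (fun t => ((\det (M t))^-1 *: \adj (M t)) i j).
Proof.
case: PR => Pc Pa Pm hd hM i j; under [X in P X]funext do rewrite !mxE.
apply: (Pm _ _ hd); apply: (Pm (fun=> _)) => //; apply: closed_det => a b.
by under [X in P X]funext do rewrite !mxE; apply: hM.
Qed.

End Closure.

Lemma continuous_within_closed (A : set R) :
  ring_closed_fun (fun f => {within A, continuous f}).
Proof.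
split=> [c|f g hf hg|f g hf hg]; apply/subspace_continuousP => x Ax.
- exact: cvg_cst.
- by apply: cvgD; apply: (subspace_continuousP _ _).1.
- by apply: cvgM; apply: (subspace_continuousP _ _).1.
Qed.

Lemma continuous_withinV (A : set R) f : (forall x, A x -> f x != 0) ->
  {within A, continuous f} -> {within A, continuous (fun t => (f t)^-1)}.
Proof.
move=> f0 hf; apply/subspace_continuousP => x Ax.
by apply: cvgV; [exact: f0|exact: (subspace_continuousP _ _).1 hf x Ax].
Qed.

Lemma derivable_closed x : ring_closed_fun (fun f => derivable f x 1).
Proof.
split=> [c|f g hf hg|f g hf hg]; first exact: derivable_cst.
  exact: derivableD.
exact: derivableM.
Qed.

End RingClosedFunctions.

Lemma is_derive_mulmx (R : realType) m n p (A : R -> 'M[R]_(m, n)) (B : R -> 'M[R]_(n, p))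
    (dA : 'M[R]_(m, n)) (dB : 'M[R]_(n, p)) (t : R) :
  (forall i j, is_derive t 1 (fun u => A u i j) (dA i j)) ->
  (forall i j, is_derive t 1 (fun u => B u i j) (dB i j)) ->
  forall i j, is_derive t 1 (fun u => (A u *m B u) i j) ((dA *m B t + A t *m dB) i j).
Proof.
move=> hA hB i j; rewrite !mxE -big_split /=.
have -> : (fun u => (A u *m B u) i j) = \sum_k (fun u => A u i k * B u k j).
  by apply/funext => u; rewrite fct_sumE mxE.
apply: is_derive_sum => k; rewrite addrC.
by rewrite (mulrC (dA i k)); apply: (is_deriveM (hA i k) (hB k j)).
Qed.

Section Flow.
Variables (R : realType) (d : nat) (alpha : R -> 'M[R]_d) (F : R -> R -> 'M[R]_d).
Hypothesis flow_id : forall s : R, s \in `[0, 1] -> F s s = 1%:M.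
Hypothesis flow_cont : forall s : R, s \in `[0, 1] -> forall i j,
  {within `[0, 1], continuous (fun t => F s t i j)}.
Hypothesis flow_derive : forall s : R, s \in `[0, 1] -> forall t : R, t \in `]0, 1[ ->
  forall i j, is_derive t 1 (fun u => F s u i j) ((alpha t *m F s t) i j).
Hypothesis flow_unit : forall t : R, t \in `[0, 1] -> gfl F t \in unitmx.

(* [invmx] is defined by cases on [unitmx]; the adjugate formula is the everywhere
   defined expression whose regularity can be computed. *)
Local Notation ginv t := ((\det (gfl F t))^-1 *: \adj (gfl F t)).

Lemma ginvE t : t \in `[0, 1] -> ginv t = invmx (gfl F t).
Proof. by move=> t01; rewrite /invmx flow_unit. Qed.

Lemma zero_in01 : (0 : R) \in `[0, 1].
Proof. by rewrite in_itv /= lexx ler01. Qed.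

Lemma in01_oo (t : R) : t \in `]0, 1[ -> t \in `[0, 1].
Proof. by rewrite !in_itv /= => /andP[? ?]; apply/andP; split; apply: ltW. Qed.

Lemma ginv_continuous i j : {within `[0, 1], continuous (fun t => ginv t i j)}.
Proof.
have gc := flow_cont zero_in01.
apply: (closed_adjinv (continuous_within_closed _)); last exact: gc.
apply: continuous_withinV; last exact: (closed_det (continuous_within_closed _)).
by move=> t t01; rewrite -unitfE -unitmxE flow_unit ?inE.
Qed.

Lemma ginv_derivable t : t \in `]0, 1[ -> forall i j, derivable (fun u => ginv u i j) t 1.
Proof.
move=> t01; have gd i j : derivable (fun u => gfl F u i j) t 1.
  by apply: ex_derive; apply: (flow_derive zero_in01 t01 i j).
apply: (closed_adjinv (derivable_closed _)); last exact: gd.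
apply: derivableV; last exact: (closed_det (derivable_closed _)).
by rewrite -unitfE -unitmxE flow_unit ?in01_oo.
Qed.

Lemma ginv_flow_derive0 (s t : R) : s \in `[0, 1] -> t \in `]0, 1[ ->
  forall i j, is_derive t 1 (fun u => (ginv u *m F s u) i j) 0.
Proof.
move=> s01 t01; set W := fun u => ginv u *m F s u.
pose dW := \matrix_(i, j) 'D_1 (fun u => W u i j) t.
have hW i j : is_derive t 1 (fun u => W u i j) (dW i j).
  rewrite mxE; apply: derivableP; apply: (closed_mulmx (derivable_closed _)).
    exact: ginv_derivable.
  by move=> a b; apply: ex_derive; apply: (flow_derive s01 t01 a b).
have gW : gfl F t *m W t = F s t by rewrite /W ginvE ?in01_oo // mulKVmx ?flow_unit ?in01_oo.
have hgW := is_derive_mulmx (flow_derive zero_in01 t01) hW.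
have {}hgW i j : is_derive t 1 (fun u => F s u i j)
    ((alpha t *m gfl F t *m W t + gfl F t *m dW) i j).
  apply: near_eq_is_derive (hgW i j); near=> u.
  have /in01_oo u01 : u \in `]0, 1[ by near: u; exact: near_in_itvoo.
  by rewrite /W ginvE ?mulKVmx ?flow_unit.
have : alpha t *m gfl F t *m W t + gfl F t *m dW = alpha t *m F s t + 0.
  apply/matrixP => i j; rewrite addr0 -(@derive_val _ _ _ _ _ _ _ (hgW i j)).
  exact: (@derive_val _ _ _ _ _ _ _ (flow_derive s01 t01 i j)).
rewrite -mulmxA gW => /addrI /(congr1 (mulmx (invmx (gfl F t)))).
rewrite mulKmx ?flow_unit ?in01_oo // mulmx0 => dW0 i j.
by have := hW i j; rewrite dW0 mxE.
Unshelve. all: by end_near.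
Qed.

Lemma ginv_flow_const (s t : R) : s \in `[0, 1] -> t \in `[0, 1] ->
  ginv t *m F s t = ginv 0 *m F s 0.
Proof.
move=> s01; rewrite in_itv /= => /andP[t0 t1]; apply/matrixP => i j.
have hd x : x \in `]0, t[ -> is_derive x 1 (fun u => (ginv u *m F s u) i j) 0.
  move=> x0t; apply: ginv_flow_derive0 => //; move: x0t; rewrite !in_itv /=.
  by case/andP=> ? ?; apply/andP; split => //; apply: lt_le_trans t1.
have hc : {within `[0, t], continuous (fun u => (ginv u *m F s u) i j)}.
  apply: continuous_subspaceW (closed_mulmx (continuous_within_closed `[0, 1]) _ _ i j).
  - by move=> x /=; rewrite !in_itv /= => /andP[-> ?]; apply: le_trans t1.
  - exact: ginv_continuous.
  - exact: flow_cont.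
have [c _] := MVT_segment t0 hd hc.
by rewrite mul0r => /eqP; rewrite subr_eq0 => /eqP.
Qed.

Lemma flowE (s t : R) : s \in `[0, 1] -> t \in `[0, 1] ->
  F s t = gfl F t *m invmx (gfl F s).
Proof.
move=> s01 t01; have := ginv_flow_const s01 t01.
rewrite -(ginv_flow_const s01 s01) flow_id // mulmx1 !ginvE // => <-.
by rewrite mulKVmx ?flow_unit.
Qed.

End Flow.

(** * Integrals and the covariance h *)

Section MatrixIntegral.
Variable R : realType.
Local Notation mu := (@lebesgue_measure R).

Lemma subset_itv01 (a b : R) : 0 <= a -> b <= 1 -> `[a, b] `<=` `[0, 1].
Proof.
move=> a0 b1 x /=; rewrite !in_itv /= => /andP[ax xb].
by rewrite (le_trans a0 ax) (le_trans xb b1).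
Qed.

Lemma continuous01_integrable (f : R -> R) (a b : R) : 0 <= a -> b <= 1 ->
  {within `[0, 1], continuous f} -> mu.-integrable `[a, b] (EFin \o f).
Proof.
move=> a0 b1 fc; apply: continuous_compact_integrable; first exact: segment_compact.
exact: continuous_subspaceW (subset_itv01 a0 b1) fc.
Qed.

Lemma Rintegral_sum01 (I : Type) (s : seq I) (f : I -> R -> R) (a b : R) :
  0 <= a -> b <= 1 -> (forall i, {within `[0, 1], continuous f i}) ->
  Rintegral mu `[a, b] (fun w => \sum_(i <- s) f i w) =
  \sum_(i <- s) Rintegral mu `[a, b] (f i).
Proof.
move=> a0 b1 fc; elim: s => [|i s IH].
  rewrite (_ : (fun w => _) = fun=> 0); last by apply/funext => w; rewrite big_nil.
  by rewrite big_nil Rintegral_cst ?mul0r.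
rewrite (_ : (fun w => _) = fun w => f i w + \sum_(j <- s) f j w); last first.
  by apply/funext => w; rewrite big_cons.
have sc : {within `[0, 1], continuous (fun w => \sum_(j <- s) f j w)}.
  exact: (closed_sum (continuous_within_closed _)).
rewrite big_cons RintegralD ?IH //; exact: continuous01_integrable.
Qed.

Lemma mx_integral_mull m n p (C : 'M[R]_(m, n)) (K : R -> 'M[R]_(n, p)) (a b : R) :
  0 <= a -> b <= 1 -> (forall i j, {within `[0, 1], continuous (fun w => K w i j)}) ->
  mx_integral (fun w => C *m K w) a b = C *m mx_integral K a b.
Proof.
move=> a0 b1 Kc; apply/matrixP => i j; rewrite !mxE.
have [Pc _ Pm] := @continuous_within_closed R `[0, 1].
rewrite (_ : (fun w => _) = fun w => \sum_k C i k * K w k j); last first.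
  by apply/funext => w; rewrite mxE.
rewrite Rintegral_sum01 //; last by move=> k; apply: Pm.
apply: eq_bigr => k _; rewrite mxE RintegralZl //; exact: continuous01_integrable.
Qed.

Lemma mx_integral_mulr m n p (K : R -> 'M[R]_(m, n)) (D : 'M[R]_(n, p)) (a b : R) :
  0 <= a -> b <= 1 -> (forall i j, {within `[0, 1], continuous (fun w => K w i j)}) ->
  mx_integral (fun w => K w *m D) a b = mx_integral K a b *m D.
Proof.
move=> a0 b1 Kc; apply/matrixP => i j; rewrite !mxE.
have [Pc _ Pm] := @continuous_within_closed R `[0, 1].
rewrite (_ : (fun w => _) = fun w => \sum_k D k j * K w i k); last first.
  by apply/funext => w; rewrite mxE; apply: eq_bigr => k _; rewrite mulrC.
rewrite Rintegral_sum01 //; last by move=> k; apply: Pm.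
apply: eq_bigr => k _; rewrite mxE RintegralZl 1?mulrC //; exact: continuous01_integrable.
Qed.

Lemma mx_integral_pt n p (K : R -> 'M[R]_(n, p)) (a : R) : mx_integral K a a = 0.
Proof. by apply/matrixP => i j; rewrite !mxE set_itv1 Rintegral_set1. Qed.

Lemma mx_integral_split n p (K : R -> 'M[R]_(n, p)) (a b c : R) :
  0 <= a -> a <= b -> b <= c -> c <= 1 ->
  (forall i j, {within `[0, 1], continuous (fun w => K w i j)}) ->
  mx_integral K a c = mx_integral K a b + mx_integral K b c.
Proof.
move=> a0 ab bc c1 Kc; apply/matrixP => i j; rewrite !mxE.
have Ki := continuous01_integrable a0 c1 (Kc i j).
have := Rintegral_itvB Ki (_ : (BLeft a <= BRight b)%O) (_ : (BRight b <= BRight c)%O).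
rewrite Rintegral_itv_obnd_cbnd.
- by move=> h; rewrite -h ?bnd_simp // addrC subrK.
- apply: integrableS Ki => // x /=; rewrite !in_itv /= => /andP[bx ->].
  by rewrite andbT (le_trans ab (ltW bx)).
all: by rewrite bnd_simp.
Qed.

End MatrixIntegral.

Lemma h0_sym (R : realType) (d mm : nat) (F : R -> R -> 'M[R]_d) (sG : R -> 'M[R]_(d, mm))
    (a b : R) :
  (h0 F sG a b)^T = h0 F sG a b.
Proof.
apply/matrixP => i j; rewrite mxE /h0 /hu /mx_integral !mxE; apply: eq_Rintegral => w _.
have sym : (F w 0 *m Gam sG w *m (F w 0)^T)^T = F w 0 *m Gam sG w *m (F w 0)^T.
  by rewrite /Gam !trmx_mul !trmxK !mulmxA.
by rewrite -[in RHS]sym [in RHS]mxE.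
Qed.

Section Covariance.
Variables (R : realType) (d mm : nat) (alpha : R -> 'M[R]_d) (sG : R -> 'M[R]_(d, mm))
  (F : R -> R -> 'M[R]_d).
Hypothesis sG_cont : forall i j, {within `[0, 1], continuous (fun t => sG t i j)}.
Hypothesis flow_id : forall s : R, s \in `[0, 1] -> F s s = 1%:M.
Hypothesis flow_cont : forall s : R, s \in `[0, 1] -> forall i j,
  {within `[0, 1], continuous (fun t => F s t i j)}.
Hypothesis flow_derive : forall s : R, s \in `[0, 1] -> forall t : R, t \in `]0, 1[ ->
  forall i j, is_derive t 1 (fun u => F s u i j) ((alpha t *m F s t) i j).
Hypothesis flow_unit : forall t : R, t \in `[0, 1] -> gfl F t \in unitmx.

Let flowE' := flowE flow_id flow_cont flow_derive flow_unit.

Lemma gfl0 : gfl F 0 = 1%:M.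
Proof. by rewrite /gfl flow_id // zero_in01. Qed.

Lemma flow_from0 (w u : R) : w \in `[0, 1] -> u \in `[0, 1] -> F w u = gfl F u *m F w 0.
Proof. by move=> w01 u01; rewrite !flowE' ?zero_in01 // gfl0 mul1mx. Qed.

Lemma kernel0_continuous i j :
  {within `[0, 1], continuous (fun w => (F w 0 *m Gam sG w *m (F w 0)^T) i j)}.
Proof.
pose C01 := fun f : R -> R => {within `[0, 1], continuous f}.
have P : ring_closed_fun C01 := @continuous_within_closed R `[0, 1].
have gc := ginv_continuous flow_cont flow_unit.
have Gc a b : {within `[0, 1], continuous (fun w => Gam sG w a b)}.
  by apply: (closed_mulmx P) => //; apply: (closed_trmx (P := C01) sG_cont).
have : {within `[0, 1], continuous (fun w =>
    (((\det (gfl F w))^-1 *: \adj (gfl F w)) *m Gam sG w *m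
     ((\det (gfl F w))^-1 *: \adj (gfl F w))^T) i j)}.
  by apply: (closed_mulmx P); [apply: (closed_mulmx P)|apply: (closed_trmx (P := C01) gc)].
apply: subspace_eq_continuous => w; rewrite in_setE => w01.
by rewrite /from_subspace /= ginvE // flowE' ?zero_in01 // gfl0 mul1mx.
Qed.

Lemma hu_conj (u a b : R) : u \in `[0, 1] -> 0 <= a -> b <= 1 ->
  hu F sG u a b = gfl F u *m h0 F sG a b *m (gfl F u)^T.
Proof.
move=> u01 a0 b1; have K0c := kernel0_continuous.
rewrite /h0 /hu -mx_integral_mull // -mx_integral_mulr //; last first.
  apply: (closed_mulmx (@continuous_within_closed R `[0, 1])) => // *; exact: cvg_cst.
apply/matrixP => i j; rewrite !mxE; apply: eq_Rintegral => w.
rewrite inE /= => /(subset_itv01 a0 b1) w01.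
by rewrite flow_from0 // trmx_mul !mulmxA.
Qed.

Lemma h0_split (a b c : R) : 0 <= a -> a <= b -> b <= c -> c <= 1 ->
  h0 F sG a c = h0 F sG a b + h0 F sG b c.
Proof. by move=> *; apply: mx_integral_split => //; exact: kernel0_continuous. Qed.

End Covariance.

(** * The dual family *)

Section DualFamily.
Variables (R : realType) (d mm : nat) (alpha : R -> 'M[R]_d) (sG : R -> 'M[R]_(d, mm))
  (F : R -> R -> 'M[R]_d) (sigma : nat -> nat -> 'M[R]_d) (lp mp rp : nat -> nat -> R).
Hypothesis sG_cont : forall i j, {within `[0, 1], continuous (fun t => sG t i j)}.
Hypothesis flow_id : forall s : R, s \in `[0, 1] -> F s s = 1%:M.
Hypothesis flow_cont : forall s : R, s \in `[0, 1] -> forall i j,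
  {within `[0, 1], continuous (fun t => F s t i j)}.
Hypothesis flow_derive : forall s : R, s \in `[0, 1] -> forall t : R, t \in `]0, 1[ ->
  forall i j, is_derive t 1 (fun u => F s u i j) ((alpha t *m F s t) i j).
Hypothesis nondegenerate : forall u v : R, 0 <= u -> u < v -> v <= 1 ->
  posdef (F u v *m hu F sG u u v *m (F u v)^T).
Hypothesis lp_root : lp 1%N 0%N = 0.
Hypothesis rp_root : rp 1%N 0%N = 1.
Hypothesis children_bounds : forall n k, (0 < n)%N -> (k < 2 ^ n.-1)%N ->
  [/\ lp n.+1 k.*2 = lp n k, rp n.+1 k.*2 = mp n k,
      lp n.+1 k.*2.+1 = mp n k & rp n.+1 k.*2.+1 = rp n k].
Hypothesis node_ordered : forall n k, (0 < n)%N -> (k < 2 ^ n.-1)%N ->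
  lp n k < mp n k /\ mp n k < rp n k.
Hypothesis cholesky_root :
  is_cholesky (gfl F 1 *m h0 F sG 0 1 *m (gfl F 1)^T) (sigma 0%N 0%N).
Hypothesis cholesky_node : forall n k, (0 < n)%N -> (k < 2 ^ n.-1)%N ->
  is_cholesky (Sigma F sG (lp n k) (mp n k) (rp n k)) (sigma n k).

Local Notation g := (gfl F).
Local Notation h := (h0 F sG).

Lemma in01 (x : R) : 0 <= x -> x <= 1 -> x \in `[0, 1].
Proof. by move=> x0 x1; rewrite in_itv /= x0 x1. Qed.

Lemma gfl_unit t : t \in `[0, 1] -> g t \in unitmx.
Proof.
rewrite in_itv /= => /andP[t0 t1]; have [<-|t_gt0] := eqVneq 0 t.
  by rewrite /gfl flow_id ?in01 // unitmx1.
have t_pos : 0 < t by rewrite lt_neqAle t_gt0.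
have /posdef_unitmx := nondegenerate (lexx 0) t_pos t1.
by rewrite !unitmx_mul => /andP[/andP[]].
Qed.

Let hu_conj' := hu_conj sG_cont flow_id flow_cont flow_derive gfl_unit.
Let h_split := h0_split sG_cont flow_id flow_cont flow_derive gfl_unit.

Lemma h_unitmx (a b : R) : 0 <= a -> a < b -> b <= 1 -> h a b \in unitmx.
Proof.
move=> a0 ab b1; have /posdef_unitmx := nondegenerate a0 ab b1.
rewrite hu_conj' ?in01 //; last by apply: ltW; apply: lt_le_trans b1.
by rewrite !unitmx_mul => /andP[/andP[_ /andP[/andP[]]]].
Qed.

Lemma node_bounds n k : node n k ->
  [/\ 0 <= lp n k, lp n k < mp n k, mp n k < rp n k & rp n k <= 1].
Proof.
move=> hk; have [l0 r1] := node_in01 lp_root rp_root children_bounds node_ordered hk.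
by have [lm mr] := node_lt node_ordered hk.
Qed.

Local Notation Lm p q := (Lmat F sG (sigma p q) (lp p q) (mp p q)).
Local Notation Rm p q := (Rmat F sG (sigma p q) (mp p q) (rp p q)).
Local Notation Mm p q := (Mmat F (sigma p q) (mp p q)).

Lemma sigma_unit n k : node n k -> sigma n k \in unitmx.
Proof. by case/andP=> n0 hk; apply: cholesky_unitmx (cholesky_node n0 hk). Qed.

Lemma Mmat_split p q : node p q -> Mm p q = Lm p q + Rm p q.
Proof.
move=> hq; have [l0 lm mr r1] := node_bounds hq.
have m01 : mp p q \in `[0, 1] by apply: in01; lra.
have uA : h (lp p q) (mp p q) \in unitmx by apply: h_unitmx; lra.
have uB : h (mp p q) (rp p q) \in unitmx by apply: h_unitmx; lra.
have hlr : h (lp p q) (rp p q) = h (lp p q) (mp p q) + h (mp p q) (rp p q).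
  by apply: h_split; lra.
have uAB : h (lp p q) (mp p q) + h (mp p q) (rp p q) \in unitmx.
  by rewrite -hlr; apply: h_unitmx; lra.
rewrite /Mmat /Lmat /Rmat -mulmxDl -mulmxDl -invmx_parallel_sum //.
apply: conj_cholesky_trmx; rewrite ?gfl_unit ?sigma_unit //.
  by rewrite !unitmx_mul uA uB unitmx_inv uAB.
case/andP: hq => p0 hq; have [_ _ ->] := cholesky_node p0 hq.
rewrite /Sigma !hu_conj' //; [|lra|lra].
by rewrite hlr conj_invmx_conj ?gfl_unit // !mulmxA.
Qed.

Lemma Lmat_Rmat_h p q : node p q ->
  (Lm p q)^T *m h (lp p q) (mp p q) = (Rm p q)^T *m h (mp p q) (rp p q).
Proof.
move=> hq; have [l0 lm mr r1] := node_bounds hq.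
rewrite /Lmat /Rmat -!mulmxA !trmx_invmx_mul_sym ?h0_sym //; apply: h_unitmx; lra.
Qed.

Local Notation Delta := (Delta F sG sigma lp mp rp).
Local Notation psi := (psi F sG sigma lp mp rp).

Lemma Delta_nodeE p q x (fl fm fr : 'M[R]_d) : node p q ->
  x (lp p q) = g (lp p q) *m fl -> x (mp p q) = g (mp p q) *m fm ->
  x (rp p q) = g (rp p q) *m fr ->
  Delta p q x = (Mm p q)^T *m fm - (Lm p q)^T *m fl - (Rm p q)^T *m fr.
Proof.
move=> hq xl xm xr; have [l0 lm mr r1] := node_bounds hq.
have p0 : p != 0%N by case/andP: hq; rewrite lt0n.
rewrite /Delta (negbTE p0) /= xl xm xr -!(mulmxA _ (invmx _)) !mulKmx //;
  by apply/gfl_unit/in01; lra.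
Qed.

Lemma h_subl (a b c : R) : 0 <= a -> a <= b -> b <= c -> c <= 1 -> h a c - h a b = h b c.
Proof. by move=> a0 ab bc c1; rewrite (h_split a0 ab bc c1) addrC addKr. Qed.

Lemma h_subr (a b c : R) : 0 <= a -> a <= b -> b <= c -> c <= 1 -> h b c - h a c = - h a b.
Proof. by move=> a0 ab bc c1; rewrite (h_split a0 ab bc c1) opprD addrCA subrr addr0. Qed.

Lemma Delta_left_eq0 p q (a : R) (C : 'M[R]_d) x : node p q -> 0 <= a -> a <= lp p q ->
  {in [:: lp p q; mp p q; rp p q], x =1 fun t => g t *m (h a t *m C)} ->
  Delta p q x = 0.
Proof.
move=> hq a0 al hx; have [l0 lm mr r1] := node_bounds hq.
rewrite (Delta_nodeE hq (hx _ _) (hx _ _) (hx _ _)) ?inE ?eqxx ?orbT //.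
apply: (dual_combination_eq0 _ (Lmat_Rmat_h hq)).
- by rewrite Mmat_split // linearD.
- by rewrite -mulmxBl h_subl //; lra.
- by rewrite -mulmxBl h_subl //; lra.
Qed.

Lemma Delta_right_eq0 p q (b : R) (C : 'M[R]_d) x : node p q -> rp p q <= b -> b <= 1 ->
  {in [:: lp p q; mp p q; rp p q], x =1 fun t => g t *m (h t b *m C)} ->
  Delta p q x = 0.
Proof.
move=> hq rb b1 hx; have [l0 lm mr r1] := node_bounds hq.
rewrite (Delta_nodeE hq (hx _ _) (hx _ _) (hx _ _)) ?inE ?eqxx ?orbT //.
apply: (dual_combination_eq0 (C := - C) _ (Lmat_Rmat_h hq)).
- by rewrite Mmat_split // linearD.
- by rewrite -mulmxBl h_subr ?mulNmx ?mulmxN //; lra.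
- by rewrite -mulmxBl h_subr ?mulNmx ?mulmxN //; lra.
Qed.

Lemma psi_left n k t : node n k -> lp n k <= t -> t <= mp n k ->
  psi n k t = g t *m (h (lp n k) t *m Lm n k).
Proof.
move=> hk lt tm; have n0 : n != 0%N by case/andP: hk; rewrite lt0n.
by rewrite /psi (negbTE n0) /psi_nk lt tm mulmxA.
Qed.

Lemma psi_right n k t : node n k -> mp n k <= t -> t <= rp n k ->
  psi n k t = g t *m (h t (rp n k) *m Rm n k).
Proof.
move=> hk mt tr; have [l0 lm mr r1] := node_bounds hk.
have n0 : n != 0%N by case/andP: hk; rewrite lt0n.
rewrite /psi (negbTE n0) /psi_nk mt tr; case: ifP => [/andP[_ tm]|_]; last by rewrite mulmxA.
(* At [t = mp n k] the definition takes the left branch; both branches equal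
   [g t *m invmx (g t) *m sigma n k] there. *)
have -> : t = mp n k by apply/eqP; rewrite eq_le tm mt.
by rewrite /Lmat /Rmat !mulmxA !mulmxK //; apply: h_unitmx; lra.
Qed.

Lemma h_pt (a : R) : h a a = 0.
Proof. exact: mx_integral_pt. Qed.

Lemma psi_outside n k t : node n k -> outside_node lp rp n k t -> psi n k t = 0.
Proof.
move=> hk; have [l0 lm mr r1] := node_bounds hk.
have n0 : n != 0%N by case/andP: hk; rewrite lt0n.
rewrite /psi (negbTE n0) /psi_nk /outside_node; case/orP => [tl|rt].
  have [->|tl'] := eqVneq t (lp n k).
    by rewrite lexx (ltW lm) h_pt mulmx0 mul0mx.
  have t_lt : t < lp n k by rewrite lt_neqAle tl' tl.
  by rewrite (lt_geF t_lt) (lt_geF (lt_trans t_lt lm)).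
have [->|rt'] := eqVneq t (rp n k).
  by rewrite (lt_geF mr) andbF (ltW mr) lexx h_pt mulmx0 mul0mx.
have r_lt : rp n k < t by rewrite lt_neqAle eq_sym rt' rt.
by rewrite (lt_geF r_lt) (lt_geF (lt_trans mr r_lt)) !andbF.
Qed.

Lemma Delta_psi_self n k : node n k -> Delta n k (psi n k) = 1%:M.
Proof.
move=> hk; have [l0 lm mr r1] := node_bounds hk.
rewrite (Delta_nodeE (fl := 0) (fm := h (lp n k) (mp n k) *m Lm n k) (fr := 0) hk).
- rewrite !mulmx0 !subr0 /Mmat /Lmat trmx_mul !trmxK !mulmxA !mulmxK ?mulVmx ?sigma_unit //.
    by apply/gfl_unit/in01; lra.
  by apply: h_unitmx; lra.
- by rewrite mulmx0 psi_outside // /outside_node lexx.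
- by rewrite psi_left //; lra.
- by rewrite mulmx0 psi_outside // /outside_node lexx orbT.
Qed.

Lemma Delta_root_psi n k : inI n k ->
  Delta 0 0 (psi n k) = (if (n == 0%N) && (k == 0%N) then 1 else 0)%:M.
Proof.
rewrite /Delta /=; case/orP => [/andP[/eqP -> /eqP ->]|hk] /=.
  have g1 : g 1 \in unitmx by apply/gfl_unit/in01; [exact: ler01|exact: lexx].
  have [_ _ chol] := cholesky_root.
  rewrite /psi /psi_00 /L00 -!mulmxA mulKmx // mulmxA (mulmxA (invmx (h 0 1))).
  apply: cholesky_quad_form g1 _ (cholesky_unitmx cholesky_root) chol.
  by apply: h_unitmx; rewrite ?ltr01.
have n0 : n != 0%N by case/andP: hk; rewrite lt0n.
have [l0 lm mr r1] := node_bounds hk.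
rewrite (negbTE n0) /= psi_outside ?mulmx0 ?raddf0 //.
by rewrite /outside_node r1 orbT.
Qed.

Lemma Delta_node_psi n k p q : inI n k -> node p q ->
  Delta p q (psi n k) = (if (n == p) && (k == q) then 1 else 0)%:M.
Proof.
move=> hk hq; have [l0 lm mr r1] := node_bounds hq.
have p0 : p != 0%N by case/andP: hq; rewrite lt0n.
case/orP: hk => [/andP[/eqP -> /eqP ->]|hk].
  rewrite eq_sym (negbTE p0) raddf0.
  by apply: (Delta_left_eq0 (C := L00 F sG (sigma 0%N 0%N)) hq (lexx 0) l0) => t _;
    rewrite /psi /psi_00 mulmxA.
have [/andP[/eqP <- /eqP <-]|ne] := boolP ((n == p) && (k == q)).
  exact: Delta_psi_self.
rewrite raddf0; have [l0' lm' mr' r1'] := node_bounds hk.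
have {}ne : (n != p) || (k != q) by rewrite -negb_and.
case: (node_relative_position children_bounds node_ordered hk hq ne) => [[lnl rm]|[ml rr]|].
- apply: (Delta_left_eq0 (C := Lm n k) hq l0' lnl) => t.
  by rewrite !inE => /or3P[] /eqP ->; apply: (psi_left hk); lra.
- apply: (Delta_right_eq0 (C := Rm n k) hq rr r1') => t.
  by rewrite !inE => /or3P[] /eqP ->; apply: (psi_right hk); lra.
case/and3P=> ol om or.
rewrite (Delta_nodeE (fl := 0) (fm := 0) (fr := 0) hq) ?mulmx0 ?subr0 //;
  exact: psi_outside.
Qed.

End DualFamily.

Theorem proposition5 (R : realType) (d mm : nat)
  (alpha : R -> 'M[R]_d) (sG : R -> 'M[R]_(d, mm)) (F : R -> R -> 'M[R]_d)
  (sigma : nat -> nat -> 'M[R]_d) (rho : R) (lp mp rp : nat -> nat -> R) :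
  (0 < d)%N -> (0 < mm)%N ->
  (forall i j, {within `[0, 1], continuous (fun t => alpha t i j)}) ->
  (forall i j, {within `[0, 1], continuous (fun t => sG t i j)}) ->
  (forall s : R, s \in `[0, 1] -> F s s = 1%:M) ->
  (forall s : R, s \in `[0, 1] -> forall i j,
      {within `[0, 1], continuous (fun t => F s t i j)}) ->
  (forall s : R, s \in `[0, 1] -> forall t : R, t \in `]0, 1[ -> forall i j,
      is_derive t 1 (fun u => F s u i j) ((alpha t *m F s t) i j)) ->
  (forall u v : R, 0 <= u -> u < v -> v <= 1 ->
      posdef (F u v *m hu F sG u u v *m (F u v)^T)) ->
  0 < rho < 1 ->
  lp 1%N 0%N = 0 -> rp 1%N 0%N = 1 ->
  (forall n k, (0 < n)%N -> (k < 2 ^ n.-1)%N ->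
     [/\ lp n.+1 k.*2 = lp n k, rp n.+1 k.*2 = mp n k,
         lp n.+1 k.*2.+1 = mp n k & rp n.+1 k.*2.+1 = rp n k]) ->
  (forall n k, (0 < n)%N -> (k < 2 ^ n.-1)%N ->
     [/\ lp n k < mp n k, mp n k < rp n k &
         Num.max (rp n k - mp n k) (mp n k - lp n k) < rho * (rp n k - lp n k)]) ->
  is_cholesky (gfl F 1 *m h0 F sG 0 1 *m (gfl F 1)^T) (sigma 0%N 0%N) ->
  (forall n k, (0 < n)%N -> (k < 2 ^ n.-1)%N ->
     is_cholesky (Sigma F sG (lp n k) (mp n k) (rp n k)) (sigma n k)) ->
  forall n k p q, inI n k -> inI p q ->
    Delta F sG sigma lp mp rp p q (psi F sG sigma lp mp rp n k) =
    (if (n == p) && (k == q) then 1 else 0)%:M.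
Proof.
move=> _ _ _ sG_cont flow_id flow_cont flow_derive nondeg _ l_root r_root children
  partition chol_root chol_node n k p q hk.
have ordered : forall n k, (0 < n)%N -> (k < 2 ^ n.-1)%N ->
    lp n k < mp n k /\ mp n k < rp n k.
  by move=> n' k' n0 hk'; have [] := partition n' k' n0 hk'.
case/orP => [/andP[/eqP -> /eqP ->]|hq].
  exact: Delta_root_psi.
exact: Delta_node_psi.
Qed.
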